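(* Let $\beta\ge0$ and $h\in\mathbb R$ with $\textsc{f}(\beta,h)>0$. Then for every $\gamma\in(0,\textsc{f}(\beta,h)]$ there exists a $\mathbb P$-a.s. finite random variable $N_0(\gamma,\omega)$ such that for all $N\ge N_0(\gamma,\omega)$, \[ \mathbf P_{N,\omega,\beta,h}\big(\eta_{1,N}>\gamma N\big)\le\exp\big(-\gamma N\,\textsc{f}(\beta,h)/2\big). \]
   Context: Let $\tau=(\tau_j)_{j\ge0}$ be a renewal process with $\tau_0=0$ and i.i.d. increments $\eta_j=\tau_j-\tau_{j-1}$ with values in $\mathbb N$, law $\mathbf P$; $K(n)=\mathbf P(\eta_1=n)>0$ for all $n$, $K(n)\sim C_Kn^{-(1+\alpha)}$, $\alpha>0$, $C_K>0$. Identify $\tau$ with the set $\{\tau_0,\tau_1,\dots\}$, $\delta_n=\mathbf 1_{n\in\tau}$. Let $\omega=(\omega_n)_{n\ge1}$ be i.i.d. with law $\mathbb P$, independent of $\tau$, $\lambda(s)=\log\mathbb E e^{s\omega_1}<\infty$ for all $s$, $\mathbb E\omega_1=0$, $\mathbb E\omega_1^2=1$. Disordered pinning model: $Z_{N,\omega,\beta,h}=\mathbf E[\exp(\sum_{j=1}^N(\beta\omega_j+h)\delta_j)\delta_N]$, $\mathbf P_{N,\omega,\beta,h}$ the probability on subsets of $\{0,\dots,N\}$ with $\mathbf P_{N,\omega,\beta,h}(\{A\})=\mathbf E[\exp(\sum_{j=1}^N(\beta\omega_j+h)\delta_j)\mathbf 1_{\tau\cap[0,N]=A}\delta_N]/Z_{N,\omega,\beta,h}$,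 and $\textsc{f}(\beta,h)=\lim_N\frac1N\log Z_{N,\omega,\beta,h}$ ($\mathbb P$-a.s., deterministic). Under $\mathbf P_{N,\omega,\beta,h}$, $N\in\tau$, and $\eta_{1,N}:=\max\{\eta_j: 1\le j\le|\tau\cap(0,N]|\}$ is the largest inter-arrival up to $N$. *)

From HB Require Import structures.
From mathcomp Require Import all_boot all_order all_algebra.
From mathcomp Require Import all_classical all_reals all_analysis.

Set Implicit Arguments.
Unset Strict Implicit.
Unset Printing Implicit Defensive.

Import Order.TTheory GRing.Theory Num.Theory.
Local Open Scope ring_scope.

(* A subset A of {0,...,N} is encoded as A : {set 'I_N.+1}.
   prev_pt A j = the largest element of A strictly below j (0 if none). *)
Definition prev_pt (N : nat) (A : {set 'I_N.+1}) (j : nat) : nat :=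
  (\max_(i in A | (i < j)%N) (i : nat))%N.

Definition max_gap (N : nat) (A : {set 'I_N.+1}) : nat :=
  (\max_(j in A | (0 < j)%N) ((j : nat) - prev_pt A j))%N.

(* Unnormalised pinning weight of the configuration tau \cap [0,N] = A
   (with N in tau):
     E[ exp(sum_{j=1}^N (beta om_j + h) delta_j) 1_{tau cap [0,N] = A} delta_N ]
   = 1_{0 in A, N in A} * prod_{j in A, j>=1} K(j - prev_pt A j) e^{beta om_j + h},
   since for a renewal process with tau_0 = 0 and increment law K,
   P(tau cap [0,N] = {0=t_0<...<t_k=N}) = prod_i K(t_i - t_{i-1}). *)
Definition pin_weight (R : realType) (K : nat -> R) (beta h : R)
  (om : nat -> R) (N : nat) (A : {set 'I_N.+1}) : R :=
  if (ord0 \in A) && (ord_max \in A) then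
    \prod_(j in A | (0 < j)%N) (K ((j : nat) - prev_pt A j)%N * expR (beta * om j + h))
  else 0.

Definition pin_Z (R : realType) (K : nat -> R) (beta h : R) (om : nat -> R)
  (N : nat) : R :=
  \sum_(A : {set 'I_N.+1}) @pin_weight R K beta h om N A.

Definition pin_prob (R : realType) (K : nat -> R) (beta h : R) (om : nat -> R)
  (N : nat) (E : pred {set 'I_N.+1}) : R :=
  (\sum_(A : {set 'I_N.+1} | E A) @pin_weight R K beta h om N A)
  / pin_Z K beta h om N.

(* Splitting a configuration at its last point before N + 1 gives the renewal
   equation Z_{n+1} = sum_k Z_k K(n+1-k) e_{n+1}, with e_j = exp(beta om_j + h),
   and a companion equation for G_n = Z_n P_n(eta_{1,n} > c): the last gap is
   either long, or the long gap occurs before. Since Z_{b-1} K(1) e_b <= Z_b,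
   induction on n gives
     G_N <= Z_N sum_{b <= N} sum_{a < b, b - a > c} Z_a K(b-a) / (K(1) Z_{b-1}),
   a bound over the possible endpoints (a, b) of a long gap in which no shifted
   environment appears. As Z_n = exp((F + o(1)) n) and K <= 1, for c = gamma N
   each of the at most N^2 terms is O(exp(-3 gamma F N / 4)). *)

From HB Require Import structures.
From mathcomp Require Import all_boot all_order all_algebra.
From mathcomp Require Import all_classical all_reals all_analysis.
From mathcomp Require Import ring lra.

Set Implicit Arguments.
Unset Strict Implicit.
Unset Printing Implicit Defensive.
Import Order.TTheory GRing.Theory Num.Theory numFieldNormedType.Exports.
Local Open Scope classical_set_scope.
Local Open Scope ring_scope.

Section PrevPoint.
Implicit Types (p q : pred nat) (i j k n : nat).

Definition prev p j : nat := (\max_(0 <= i < j | p i) i)%N.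

Lemma eq_prev p q j : (forall i, (i < j)%N -> p i = q i) -> prev p j = prev q j.
Proof.
move=> pq; rewrite /prev big_nat_cond [RHS]big_nat_cond.
by apply: eq_bigl => i; case: (ltnP i j) => ij; rewrite ?andbF // pq.
Qed.

Lemma prev0 p : prev p 0 = 0%N.
Proof. by rewrite /prev big_geq. Qed.

Lemma prevS p j : prev p j.+1 = if p j then j else prev p j.
Proof.
have prev_le : (prev p j <= j)%N.
  rewrite /prev big_nat_cond; apply: (big_ind (fun x => x <= j)%N) => //.
    by move=> x y; rewrite geq_max => -> ->.
  by move=> i /andP[/andP[_ /ltnW]].
rewrite /prev big_mkcond big_nat_recr //= -big_mkcond -/(prev p j).
by case: (p j); rewrite ?maxn0 // (maxn_idPr prev_le).
Qed.

Lemma prev_lt p j : (0 < j)%N -> (prev p j < j)%N.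
Proof.
elim: j => // j IH _; rewrite prevS; case: (p j) => //.
by case: j IH => [|j] IH; rewrite ?prev0 // ltnS ltnW ?IH ?ltnSn.
Qed.

Lemma prev_in p j : p 0%N -> p (prev p j).
Proof. by move=> p0; elim: j => [|j IH]; rewrite ?prev0 // prevS; case: ifP. Qed.

Lemma leq_prev p i j : (i < j)%N -> p i -> (i <= prev p j)%N.
Proof.
elim: j => // j IH; rewrite ltnS leq_eqVlt => /orP[/eqP-> pi|ij pi].
  by rewrite prevS pi.
by rewrite prevS; case: ifP => _; [exact: ltnW | exact: IH].
Qed.

Lemma prev_last p k j : p k -> (k < j)%N ->
  (forall i, (k < i < j)%N -> ~~ p i) -> prev p j = k.
Proof.
move=> pk; elim: j => // j IH; rewrite ltnS leq_eqVlt => /orP[/eqP<- _|kj gap].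
  by rewrite prevS pk.
rewrite prevS (negbTE (gap j _)) ?kj ?ltnSn //; apply: IH => // i /andP[ki ij].
by apply: gap; rewrite ki ltnW.
Qed.

Lemma prevP p k j : p 0%N -> (k < j)%N ->
  reflect (p k /\ forall i, (k < i < j)%N -> ~~ p i) (prev p j == k).
Proof.
move=> p0 kj; apply: (iffP eqP) => [<-|[pk gap]]; last exact: prev_last.
split=> [|i /andP[ki ij]]; first exact: prev_in.
by apply: contraTN ki => pi; rewrite -leqNgt leq_prev.
Qed.

Definition graft p k n : pred nat := fun j => if (j <= k)%N then p j else j == n.

Section BigGaps.
Variables (T : Type) (idx : T) (op : Monoid.law idx) (F : nat -> nat -> T).

Definition big_gaps p n : T :=
  \big[op/idx]_(0 <= j < n | p j && (0 < j)%N) F j (j - prev p j).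

Lemma eq_big_gaps p q n :
  (forall i, (i < n)%N -> p i = q i) -> big_gaps p n = big_gaps q n.
Proof.
move=> pq; rewrite /big_gaps big_nat_cond [RHS]big_nat_cond.
apply: eq_big => [j|j /andP[/andP[_ jn] _]].
  by case: (ltnP j n) => jn; [rewrite pq | rewrite !andbF].
by rewrite (@eq_prev p q) // => i ij; rewrite pq // (ltn_trans ij).
Qed.

Lemma big_gaps_graft p k n : p k -> (k < n)%N ->
  big_gaps (graft p k n) n.+1 = op (big_gaps p k.+1) (F n (n - k)).
Proof.
move=> pk kn; have n_gt0 : (0 < n)%N by apply: leq_ltn_trans kn.
have graft_n : graft p k n n by rewrite /graft leqNgt kn eqxx.
rewrite /big_gaps big_mkcond big_nat_recr //= -big_mkcond graft_n n_gt0 /=.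
have graft_k : graft p k n k by rewrite /graft leqnn.
have graft_gap i : (k < i < n)%N -> ~~ graft p k n i.
  by case/andP=> ki iN; rewrite /graft leqNgt ki ltn_eqF.
rewrite (prev_last graft_k kn graft_gap).
congr (op _ _); rewrite (big_cat_nat _ (n := k.+1)) //= [X in op _ X]big_nat_cond.
rewrite [X in op _ X]big1 ?Monoid.mulm1 => [|j /andP[kjn /andP[gj _]]]; last first.
  by move: gj; rewrite (negbTE (graft_gap j kjn)).
rewrite big_nat_cond [RHS]big_nat_cond; apply: eq_big => [j|j /andP[/andP[_ jk] _]].
  by case: (ltnP j k.+1) => jk; rewrite ?andbF ?andFb // /graft (jk : (j <= k)%N).
by rewrite (@eq_prev _ p) // => i ij; rewrite /graft (ltn_trans ij jk : (i <= k)%N).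
Qed.

End BigGaps.
End PrevPoint.

Section NatSets.
Implicit Types (p : pred nat) (i j k m n : nat).

Definition natset n (A : {set 'I_n}) : pred nat := fun j => [exists i in A, val i == j].

Definition set_of_natpred n p : {set 'I_n} := [set i : 'I_n | p i].

Lemma natsetE n (A : {set 'I_n}) (i : 'I_n) : natset A i = (i \in A).
Proof.
apply/existsP/idP => [[x /andP[xA /eqP xi]]|iA]; last by exists i; rewrite iA eqxx.
by rewrite -(val_inj xi).
Qed.

Lemma natset_lt n (A : {set 'I_n}) j : natset A j -> (j < n)%N.
Proof. by rewrite /natset => /existsP[x /andP[_ /eqP <-]]; apply: ltn_ord. Qed.

Lemma natset_of_natpred n p j : natset (set_of_natpred n p) j = (j < n)%N && p j.
Proof.
case: (ltnP j n) => jn; last by apply/negbTE/negP => /natset_lt; rewrite ltnNge jn.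
by rewrite (natsetE _ (Ordinal jn)) inE.
Qed.

Lemma prev_ptE N (A : {set 'I_N.+1}) j : (j <= N.+1)%N -> prev_pt A j = prev (natset A) j.
Proof.
move=> jN; rewrite /prev_pt /prev (big_nat_widen _ _ _ _ _ jN) big_mkord.
by apply: eq_bigl => i; rewrite natsetE.
Qed.

Lemma max_gapE N (A : {set 'I_N.+1}) :
  max_gap A = big_gaps maxn (fun _ l => l) (natset A) N.+1.
Proof.
rewrite /max_gap /big_gaps big_mkord; apply: eq_big => [i|i _]; first by rewrite natsetE.
by rewrite prev_ptE // ltnW.
Qed.

Definition tail_after n k (A : {set 'I_n.+1}) : bool :=
  [forall i : 'I_n.+1, (k < i)%N ==> ((i \in A) == (i == n :> nat))].

Lemma tail_afterP n k (A : {set 'I_n.+1}) : natset A 0 -> natset A n -> (k < n)%N ->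
  tail_after k A && natset A k = (prev (natset A) n == k).
Proof.
move=> A0 An kn; apply/idP/(prevP A0 kn) => [/andP[/forallP tail Ak]|[Ak gap]].
  split=> // i /andP[ki iN]; rewrite (natsetE _ (Ordinal (leqW iN))).
  by have := tail (Ordinal (leqW iN)); rewrite /= ki (ltn_eqF iN) => /eqP ->.
rewrite Ak andbT; apply/forallP => i; apply/implyP => ki.
have [iN|] := ltnP i n; first by rewrite -natsetE (ltn_eqF iN) (negbTE (gap i _)) ?ki.
move=> ni; have -> : i = ord_max by apply/ord_inj/eqP; rewrite /= eqn_leq ni andbT -ltnS ltn_ord.
by rewrite -natsetE /= eqxx An.
Qed.

Lemma big_tail_after (T : Type) (idx : T) (op : Monoid.com_law idx)
    n k (F : {set 'I_n.+1} -> T) : (k < n)%N ->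
  \big[op/idx]_(A | tail_after k A) F A =
  \big[op/idx]_(B : {set 'I_k.+1}) F (set_of_natpred n.+1 (graft (natset B) k n)).
Proof.
move=> kn; pose ext (B : {set 'I_k.+1}) := set_of_natpred n.+1 (graft (natset B) k n).
rewrite (reindex_onto ext (fun A => set_of_natpred k.+1 (natset A))) /=.
  apply: eq_bigl => B; apply/andP; split.
    apply/forallP => i; apply/implyP => ki.
    by rewrite inE /graft leqNgt ki.
  apply/eqP/setP => j; have jk : (j <= k)%N := ltn_ord j.
  have jn : (j < n.+1)%N by rewrite ltnS (leq_trans jk (ltnW kn)).
  by rewrite inE natset_of_natpred /graft jn jk natsetE.
move=> A /forallP tail; apply/setP => i; rewrite inE /graft.
case: ifP => ik; first by rewrite natset_of_natpred ltnS ik natsetE.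
by have := tail i; rewrite ltnNge ik => /eqP ->.
Qed.

End NatSets.

Section RenewalDecomposition.
Variables (R : realType) (K : nat -> R) (beta h : R) (om : nat -> R).

Definition gap_weight (p : pred nat) (n : nat) : R :=
  big_gaps *%R (fun j l => K l * expR (beta * om j + h)) p n.

Lemma pin_weightE N (A : {set 'I_N.+1}) :
  pin_weight K beta h om A =
  if natset A 0 && natset A N then gap_weight (natset A) N.+1 else 0.
Proof.
rewrite /pin_weight -(natsetE A ord0) -(natsetE A ord_max) /=.
case: ifP => // _; rewrite /gap_weight /big_gaps big_mkord.
by apply: eq_big => [i|i _]; rewrite ?natsetE // prev_ptE // ltnW.
Qed.

(* [pin_sum n phi] is Z_n E_n[phi(eta_{1,n})] in the notation of the paper. *)
Definition pin_sum n (phi : nat -> R) : R :=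
  \sum_(A : {set 'I_n.+1}) pin_weight K beta h om A * phi (max_gap A).

Lemma pin_sum_rec N phi : pin_sum N.+1 phi = \sum_(k < N.+1)
  pin_sum k (fun m => phi (maxn m (N.+1 - k))) * (K (N.+1 - k) * expR (beta * om N.+1 + h)).
Proof.
pose f (A : {set 'I_N.+2}) := pin_weight K beta h om A * phi (max_gap A).
have last_point A : f A = \sum_(k < N.+1) (if tail_after k A && natset A k then f A else 0).
  have [/andP[A0 AN]|AN] := boolP (natset A 0 && natset A N.+1); last first.
    by rewrite /f pin_weightE (negbTE AN) mul0r big1 // => k _; case: ifP.
  have prev_lt : (prev (natset A) N.+1 < N.+1)%N by apply: prev_lt.
  rewrite (bigD1 (Ordinal prev_lt)) //= tail_afterP // eqxx big1 ?addr0 // => k kprev.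
  by rewrite tail_afterP // ifN //; apply: contra kprev => /eqP kE; apply/eqP/val_inj.
rewrite /pin_sum (eq_bigr _ (fun A _ => last_point A)) exchange_big /=.
apply: eq_bigr => k _; have kN := ltn_ord k.
transitivity (\sum_(A | tail_after k A) (if natset A k then f A else 0)).
  by rewrite [RHS]big_mkcond; apply: eq_bigr => A _; case: tail_after.
rewrite big_tail_after // big_distrl /=; apply: eq_bigr => B _.
set A := set_of_natpred _ _; rewrite /f.
have natsetA i : (i < N.+2)%N -> natset A i = graft (natset B) k N.+1 i.
  by move=> iN; rewrite natset_of_natpred iN.
have A_k : natset A k = natset B k by rewrite natsetA ?(leqW kN) // /graft leqnn.
have A_0 : natset A 0 = natset B 0 by rewrite natsetA.
have A_N : natset A N.+1 by rewrite natsetA // /graft leqNgt kN eqxx.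
rewrite A_k; have [Bk|Bk] := boolP (natset B k); last first.
  by rewrite pin_weightE (negbTE Bk) andbF !mul0r.
rewrite !pin_weightE A_0 A_N Bk !andbT; case: (natset B 0); last by rewrite !mul0r.
rewrite /gap_weight max_gapE (eq_big_gaps _ _ natsetA) big_gaps_graft //.
by rewrite (eq_big_gaps _ _ natsetA) big_gaps_graft // -max_gapE mulrAC.
Qed.

End RenewalDecomposition.

Section LongGapBound.
Variables (R : realType) (K e Z G : nat -> R) (c : R).
Hypotheses (K_ge0 : forall n, 0 <= K n) (K1_gt0 : 0 < K 1) (e_gt0 : forall n, 0 < e n).
Hypotheses (Z0_gt0 : 0 < Z 0) (G0 : G 0 = 0).
Hypothesis Z_rec : forall n, Z n.+1 = \sum_(k < n.+1) Z k * (K (n.+1 - k) * e n.+1).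
Hypothesis G_rec : forall n, G n.+1 =
  \sum_(k < n.+1) (if c < (n.+1 - k)%:R then Z k else G k) * (K (n.+1 - k) * e n.+1).

Let w_ge0 n k : 0 <= K k * e n. Proof. exact: mulr_ge0 (K_ge0 k) (ltW (e_gt0 n)). Qed.

Lemma renewal_step n : (forall k, (k <= n)%N -> 0 <= Z k) ->
  Z n * (K 1 * e n.+1) <= Z n.+1.
Proof.
move=> Z_ge0; rewrite Z_rec (bigD1 ord_max) //= subSnn lerDl.
by apply: sumr_ge0 => k _; rewrite mulr_ge0 ?w_ge0 ?Z_ge0 // -ltnS.
Qed.

Lemma renewal_gt0 n : 0 < Z n.
Proof.
elim/ltn_ind: n => -[//|n] IH; apply: lt_le_trans (renewal_step _) => [|k kn].
  by rewrite !mulr_gt0 ?IH.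
by rewrite ltW ?IH.
Qed.

Let Z_ge0 n : 0 <= Z n. Proof. exact/ltW/renewal_gt0. Qed.

Definition long_gap_ratio b :=
  \sum_(0 <= a < b | c < (b - a)%:R) Z a * K (b - a) / (K 1 * Z b.-1).

Lemma long_gap_ratio_ge0 b : 0 <= long_gap_ratio b.
Proof. by apply: sumr_ge0 => a _; rewrite !mulr_ge0 // invr_ge0 mulr_ge0 // ltW. Qed.

Lemma long_last_gap_le n :
  \sum_(k < n.+1) (if c < (n.+1 - k)%:R then Z k * (K (n.+1 - k) * e n.+1) else 0)
  <= long_gap_ratio n.+1 * Z n.+1.
Proof.
apply: le_trans (ler_wpM2l (long_gap_ratio_ge0 _) (renewal_step (fun k _ => Z_ge0 k))).
rewrite /long_gap_ratio big_mkord mulr_suml [X in _ <= X]big_mkcond /=.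
apply: ler_sum => k _; case: ifP => // _; rewrite le_eqVlt; apply/orP; left.
by apply/eqP; field; rewrite !gt_eqF ?renewal_gt0.
Qed.

Lemma long_gap_le n : G n <= (\sum_(0 <= b < n) long_gap_ratio b.+1) * Z n.
Proof.
set D := fun n => \sum_(0 <= b < n) long_gap_ratio b.+1.
have D_ge0 m : 0 <= D m by apply: sumr_ge0 => b _; exact: long_gap_ratio_ge0.
have D_mono m n' : (m <= n')%N -> D m <= D n'.
  move=> mn; rewrite /D [X in _ <= X](big_cat_nat _ (n := m)) //= lerDl.
  by apply: sumr_ge0 => b _; exact: long_gap_ratio_ge0.
elim/ltn_ind: n => -[_|n IH]; first by rewrite G0 mulr_ge0 ?D_ge0.
rewrite G_rec; apply: le_trans (_ : _ <= \sum_(k < n.+1)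
  ((if c < (n.+1 - k)%:R then Z k * (K (n.+1 - k) * e n.+1) else 0)
   + D n * (Z k * (K (n.+1 - k) * e n.+1)))) _.
  apply: ler_sum => k _; have kn : (k <= n)%N by rewrite -ltnS.
  case: ifP => _; first by rewrite lerDl mulr_ge0 ?D_ge0 // mulr_ge0 ?Z_ge0 ?w_ge0.
  rewrite add0r [X in _ <= X]mulrA ler_wpM2r //; apply: le_trans (IH k (ltn_ord k)) _.
  exact: ler_wpM2r (Z_ge0 k) _ _ (D_mono _ _ kn).
by rewrite big_split /= -mulr_sumr -Z_rec /D big_nat_recr //= mulrDl addrC lerD2l long_last_gap_le.
Qed.

End LongGapBound.

Lemma ltr_maxn_nat (R : realDomainType) (c : R) m l :
  (c < (maxn m l)%:R) = (c < m%:R) || (c < l%:R).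
Proof.
case: (leqP m l) => ml.
  by apply/idP/orP => [|[cm|//]]; [right | apply: lt_le_trans cm _; rewrite ler_nat].
by apply/idP/orP => [|[//|cl]]; [left | apply: lt_le_trans cl _; rewrite ler_nat ltnW].
Qed.

Lemma term_le_series_lim (R : realType) (u : nat -> R) (l : R) : (forall n, 0 <= u n) ->
  (fun n => \sum_(0 <= k < n) u k) @ \oo --> l -> forall n, u n <= l.
Proof.
move=> u_ge0 u_cvg n; set S := fun n => \sum_(0 <= k < n) u k.
have S_mono : {homo S : p q / (p <= q)%N >-> p <= q}.
  move=> p q pq; rewrite /S [X in _ <= X](big_cat_nat _ (n := p)) //= lerDl.
  by apply: sumr_ge0 => k _.
have := nondecreasing_cvgn_le S_mono (cvgP _ u_cvg) n.+1.
rewrite (cvg_lim _ u_cvg) // /S big_nat_recr //=; apply: le_trans.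
by rewrite lerDr sumr_ge0.
Qed.

Section ExponentialBounds.
Variable R : realType.

Lemma near_expR_bounds (Z : nat -> R) (F eps : R) :
  (forall n, 0 < Z n) -> 0 < eps -> (fun n => ln (Z n) / n%:R) @ \oo --> F ->
  \forall n \near \oo, expR ((F - eps) * n%:R) <= Z n <= expR ((F + eps) * n%:R).
Proof.
move=> Z_gt0 eps_gt0 /fcvgrPdist_lt /(_ eps eps_gt0).
apply: filterS2 (nbhs_infty_gt 0) => n n_gt0 /=; rewrite ltr_norml => /andP[lo hi].
have n_pos : (0 : R) < n%:R by rewrite ltr0n.
have lnZE : ln (Z n) = ln (Z n) / n%:R * n%:R by rewrite divfK // gt_eqF.
rewrite -[Z n]lnK ?posrE // !ler_expR lnZE !ler_pM2r //.
by apply/andP; split; lra.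
Qed.

Lemma expR_bound_everywhere (Z : nat -> R) (a : R) : (forall n, 0 <= Z n) -> 0 <= a ->
  (\forall n \near \oo, Z n <= expR (a * n%:R)) ->
  exists2 M, 0 < M & forall n, Z n <= M * expR (a * n%:R).
Proof.
move=> Z_ge0 a_ge0 [n1 _ Z_le]; set S := \sum_(0 <= k < n1) Z k.
have S_ge0 : 0 <= S by apply: sumr_ge0 => k _.
have expR_ge1 n : 1 <= expR (a * n%:R) by rewrite -expR0 ler_expR mulr_ge0.
have S1_ge1 : 1 <= 1 + S by rewrite lerDl.
exists (1 + S) => [|n]; first by rewrite ltr_pwDl.
have [nn1|n1n] := ltnP n n1; last first.
  exact: le_trans (Z_le n n1n) (ler_peMl (expR_ge0 _) S1_ge1).
apply: le_trans (ler_peMr (le_trans ler01 S1_ge1) (expR_ge1 n)).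
apply: (@le_trans _ _ S); last by rewrite lerDr ler01.
rewrite /S (big_cat_nat (leq0n n) (ltnW nn1)) /= [X in _ + X]big_ltn //.
by rewrite addrCA lerDl addr_ge0 ?sumr_ge0.
Qed.

Lemma near_sqr_le_expR (C d : R) : 0 < d ->
  \forall N \near \oo, N%:R ^+ 2 * C <= expR (d * N%:R).
Proof.
move=> d_gt0; apply: filterS (nbhs_infty_ger (3`!%:R * C / d ^+ 3)) => N CN.
have dN_ge0 : 0 <= d * N%:R by rewrite mulr_ge0 ?ler0n ?ltW.
apply: le_trans (expR_ge1Dxn 2 dN_ge0); rewrite -[X in X <= _]add0r lerD ?ler01 //.
have -> : (d * N%:R) ^+ 3 / 3`!%:R = N%:R ^+ 2 * (N%:R * d ^+ 3 / 3`!%:R) by ring.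
rewrite ler_wpM2l ?exprn_ge0 // ler_pdivlMr ?ltr0n ?fact_gt0 // mulrC.
by rewrite -ler_pdivrMr ?exprn_gt0.
Qed.

End ExponentialBounds.

Section LongGapAsymptotics.
Variables (R : realType) (K Z : nat -> R) (F gamma : R).
Hypotheses (K1_gt0 : 0 < K 1) (K_le1 : forall n, K n <= 1).
Hypotheses (Z_gt0 : forall n, 0 < Z n) (F_gt0 : 0 < F) (gamma_gt0 : 0 < gamma).
Hypothesis Z_free_energy : (fun n => ln (Z n) / n%:R) @ \oo --> F.

(* Each long-gap term is O(exp(-(gamma F - 2 eps) N)) = O(exp(-3 d N)); the N^2 terms cost
   at most exp(d N), which leaves exp(-2 d N) = exp(-gamma F N / 2). *)
Let eps := gamma * F / 8.
Let d := gamma * F / 4.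
Let eps_gt0 : 0 < eps. Proof. by rewrite divr_gt0 ?mulr_gt0. Qed.
Let d_gt0 : 0 < d. Proof. by rewrite divr_gt0 ?mulr_gt0. Qed.

Lemma gap_exponent_le (x y n : R) : 0 <= x -> x <= y -> y + 1 <= n ->
  gamma * n < y + 1 - x -> (F + eps) * x <= F - 3 * d * n + (F - eps) * y.
Proof.
move=> x_ge0 xy yn gap; rewrite /eps /d.
have gap_F : F * (gamma * n) <= F * (y + 1 - x) by rewrite ler_pM2l // ltW.
have sum_le : gamma * F * (x + y) <= gamma * F * (2 * n) by rewrite ler_pM2l ?mulr_gt0 //; lra.
nra.
Qed.

Lemma long_gap_term_le M n1 N a b : 0 < M ->
  (forall n, Z n <= M * expR ((F + eps) * n%:R)) ->
  (forall n, (n1 <= n)%N -> expR ((F - eps) * n%:R) <= Z n) ->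
  (n1 <= b.-1)%N -> (a < b)%N -> (b <= N)%N -> gamma * N%:R < (b - a)%:R ->
  Z a * K (b - a) / (K 1 * Z b.-1) <= M * expR F / K 1 * expR (- (3 * d * N%:R)).
Proof.
move=> M_gt0 Z_le Z_ge n1b ab bN gap.
have b_eq : b = (b.-1).+1 by rewrite prednK // (leq_ltn_trans _ ab).
rewrite ler_pdivrMr ?mulr_gt0 //.
apply: le_trans (_ : _ <= M * expR ((F + eps) * a%:R)) _.
  by apply: le_trans (Z_le a); rewrite ler_piMr ?(ltW (Z_gt0 a)).
apply: (@le_trans _ _ (M * expR F / K 1 * expR (- (3 * d * N%:R)) *
                        (K 1 * expR ((F - eps) * (b.-1)%:R)))).
  have -> : M * expR F / K 1 * expR (- (3 * d * N%:R)) * (K 1 * expR ((F - eps) * (b.-1)%:R))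
      = M * expR (F - 3 * d * N%:R + (F - eps) * (b.-1)%:R).
    by rewrite !expRD; field; rewrite gt_eqF.
  rewrite ler_pM2l // ler_expR; apply: gap_exponent_le; rewrite ?ler0n ?ler_nat //.
  - by rewrite -ltnS -b_eq.
  - by rewrite natr1 -b_eq ler_nat.
  - by rewrite natr1 -b_eq -natrB // ltnW.
apply: ler_wpM2l; first by rewrite !mulr_ge0 ?expR_ge0 ?invr_ge0 ?ltW.
by apply: ler_wpM2l; [exact: ltW | exact: Z_ge].
Qed.

Lemma long_gap_ratio_sum_small : \forall N \near \oo,
  \sum_(0 <= b < N) long_gap_ratio K Z (gamma * N%:R) b.+1
    <= expR (- (gamma * N%:R * F / 2)).
Proof.
have Z_bounds := near_expR_bounds Z_gt0 eps_gt0 Z_free_energy.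
have [M M_gt0 Z_le] : exists2 M, 0 < M & forall n, Z n <= M * expR ((F + eps) * n%:R).
  apply: expR_bound_everywhere => [n||]; first exact/ltW.
    by rewrite addr_ge0 ?ltW.
  by apply: filterS Z_bounds => n /andP[].
have [n1 _ Z_ge] := Z_bounds.
have {}Z_ge n : (n1 <= n)%N -> expR ((F - eps) * n%:R) <= Z n by case/Z_ge/andP.
set C := M * expR F / K 1; have C_ge0 : 0 <= C by rewrite !mulr_ge0 ?expR_ge0 ?invr_ge0 ?ltW.
apply: filterS2 (nbhs_infty_gtr ((n1.+1)%:R / gamma)) (near_sqr_le_expR C d_gt0).
move=> N N_large N_sqr; move: N_large; rewrite ltr_pdivrMr // mulrC => N_large.
set E := expR (- (3 * d * N%:R)); have CE_ge0 : 0 <= C * E by rewrite mulr_ge0 ?expR_ge0.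
have ratio_le b : (b < N)%N -> long_gap_ratio K Z (gamma * N%:R) b.+1 <= N%:R * (C * E).
  move=> bN; rewrite /long_gap_ratio big_mkcond /=.
  apply: le_trans (_ : _ <= \sum_(0 <= a < b.+1) C * E) _.
    apply: ler_sum_nat => a /andP[_ ab]; case: ifP => // gap.
    have n1b : (n1.+1 < b.+1)%N.
      by rewrite -(ltr_nat R) (lt_trans N_large) // (lt_le_trans gap) // ler_nat leq_subr.
    exact: (long_gap_term_le (b := b.+1) M_gt0 Z_le Z_ge (ltnW n1b) ab bN gap).
  rewrite sumr_const_nat subn0 -[C * E *+ _]mulr_natl.
  by apply: ler_wpM2r => //; rewrite ler_nat.
apply: le_trans (_ : _ <= \sum_(0 <= b < N) N%:R * (C * E)) _.
  by apply: ler_sum_nat => b /andP[_ bN]; exact: ratio_le.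
rewrite sumr_const_nat subn0 -[_ *+ N]mulr_natr.
have -> : N%:R * (C * E) * N%:R = N%:R ^+ 2 * C * E by ring.
apply: le_trans (ler_wpM2r (expR_ge0 _) N_sqr) _; rewrite -expRD.
by have -> : d * N%:R + - (3 * d * N%:R) = - (gamma * N%:R * F / 2) by rewrite /d; field.
Qed.

End LongGapAsymptotics.

Section PinningBound.
Variables (R : realType) (K : nat -> R) (beta h : R) (om : nat -> R).
Hypotheses (K_ge0 : forall n, 0 <= K n) (K1_gt0 : 0 < K 1).

Let Z := pin_Z K beta h om.
Let long_gap (c : R) m : R := if c < m%:R then 1 else 0.
Let G (c : R) n := pin_sum K beta h om n (long_gap c).

Lemma pin_ZE n : Z n = pin_sum K beta h om n (fun _ => 1).
Proof. by apply: eq_bigr => A _; rewrite mulr1. Qed.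

Lemma pin_Z0 : Z 0 = 1.
Proof.
rewrite /Z /pin_Z (bigD1 [set: 'I_1]%SET) //= big1 ?addr0 => [|A AT].
  by rewrite /pin_weight !finset.in_setT big_pred0 // => j; rewrite (ord1 j) andbF.
rewrite /pin_weight ifF //; apply: contraNF AT => /andP[A0 _].
by apply/eqP/setP => i; rewrite (ord1 i) finset.in_setT A0.
Qed.

Lemma pin_Z_rec n :
  Z n.+1 = \sum_(k < n.+1) Z k * (K (n.+1 - k) * expR (beta * om n.+1 + h)).
Proof. by rewrite !pin_ZE pin_sum_rec; under [RHS]eq_bigr do rewrite pin_ZE. Qed.

Lemma long_gap_rec c n : G c n.+1 = \sum_(k < n.+1)
  (if c < (n.+1 - k)%:R then Z k else G c k) * (K (n.+1 - k) * expR (beta * om n.+1 + h)).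
Proof.
rewrite /G pin_sum_rec; apply: eq_bigr => k _; congr (_ * _).
case: ifP => gap; rewrite ?pin_ZE; apply: eq_bigr => A _; congr (_ * _);
  by rewrite /long_gap ltr_maxn_nat gap ?orbT ?orbF.
Qed.

Let Z0_gt0 : 0 < Z 0. Proof. by rewrite pin_Z0. Qed.
Let e_gt0 n : 0 < expR (beta * om n + h). Proof. exact: expR_gt0. Qed.

Lemma pin_Z_gt0 n : 0 < Z n.
Proof. exact: renewal_gt0 K_ge0 K1_gt0 e_gt0 Z0_gt0 pin_Z_rec n. Qed.

Lemma long_gap0 c : 0 <= c -> G c 0 = 0.
Proof.
move=> c_ge0; rewrite /G /pin_sum big1 // => A _.
have -> : max_gap A = 0%N by rewrite /max_gap big_pred0 // => j; rewrite (ord1 j) andbF.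
by rewrite /long_gap ltNge c_ge0 mulr0.
Qed.

Lemma pin_prob_long_gap_le c N : 0 <= c ->
  pin_prob K beta h om (N := N) (fun A => c < (max_gap A)%:R)
    <= \sum_(0 <= b < N) long_gap_ratio K Z c b.+1.
Proof.
move=> c_ge0; rewrite /pin_prob ler_pdivrMr ?pin_Z_gt0 //.
have -> : \sum_(A : {set 'I_N.+1} | c < (max_gap A)%:R) pin_weight K beta h om A = G c N.
  rewrite /G /= /pin_sum big_mkcond; apply: eq_bigr => A _.
  by rewrite /long_gap; case: ifP; rewrite ?mulr1 ?mulr0.
exact: long_gap_le K_ge0 K1_gt0 e_gt0 Z0_gt0 (long_gap0 c_ge0) pin_Z_rec (long_gap_rec c) N.
Qed.

End PinningBound.

Theorem lemma5p1
  (R : realType)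
  (* renewal increment law K(n) = P(eta_1 = n), n in {1,2,...} *)
  (K : nat -> R) (alpha CK : R)
  (hK0 : K 0%N = 0)
  (hKpos : forall n : nat, (0 < n)%N -> 0 < K n)
  (hKsum : (fun n : nat => \sum_(0 <= k < n) K k) @ \oo --> (1 : R))
  (halpha : 0 < alpha) (hCK : 0 < CK)
  (hKasy : (fun n : nat => K n * (n%:R `^ (1 + alpha))) @ \oo --> CK)
  (* disorder (omega_n)_{n >= 1}, i.i.d. with law P *)
  (d : measure_display) (T : measurableType d) (P : probability T R)
  (omega : nat -> T -> R)
  (hmeas : forall n : nat, measurable_fun [set: T] (omega n))
  (hindep : forall (I : seq nat) (B : nat -> set R),
      uniq I -> (forall i, i \in I -> (0 < i)%N) ->
      (forall i, measurable (B i)) ->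
      P (\bigcap_(i in [set i | i \in I]) (omega i @^-1` B i))
      = (\prod_(i <- I) P (omega i @^-1` B i))%E)
  (hident : forall (n : nat) (B : set R), (0 < n)%N -> measurable B ->
      P (omega n @^-1` B) = P (omega 1%N @^-1` B))
  (hexpmom : forall s : R,
      P.-integrable [set: T] (fun t => (expR (s * omega 1%N t))%:E))
  (hmean : (\int[P]_t (omega 1%N t)%:E = 0)%E)
  (hvar : (\int[P]_t ((omega 1%N t) ^+ 2)%:E = 1)%E)
  (* parameters and free energy *)
  (beta h F : R) (hbeta : 0 <= beta)
  (hF : {ae P, forall t,
      (fun N : nat => ln (pin_Z K beta h (fun n => omega n t) N) / N%:R)
        @ \oo --> F})
  (hFpos : 0 < F) :
  forall gamma : R, 0 < gamma -> gamma <= F ->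
  {ae P, forall t, exists N0 : nat, forall N : nat, (N0 <= N)%N ->
     @pin_prob R K beta h (fun n => omega n t) N
       (fun A => gamma * N%:R < (max_gap A)%:R)
     <= expR (- (gamma * N%:R * F / 2))}.
Proof.
move=> gamma gamma_gt0 _.
have K_ge0 n : 0 <= K n by case: n => [|n]; rewrite ?hK0 // ltW ?hKpos.
have K1_gt0 : 0 < K 1 by exact: hKpos.
have K_le1 := term_le_series_lim K_ge0 hKsum.
apply: filterS hF => t Z_cvg.
have Z_gt0 := pin_Z_gt0 beta h (fun n => omega n t) K_ge0 K1_gt0.
have [N0 _ small] := long_gap_ratio_sum_small K1_gt0 K_le1 Z_gt0 hFpos gamma_gt0 Z_cvg.
exists N0 => N /small; apply: le_trans.
exact: pin_prob_long_gap_le (mulr_ge0 (ltW gamma_gt0) (ler0n _ N)).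
Qed.
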